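(* There exists a chore allocation instance with two agents $N=\{1,2\}$ and two chores (with additive, nonpositive, normalized valuations $V_i(M)=-1$ and shares $s_1,s_2\in(0,1]$, $s_1+s_2=1$) such that for every allocation $\langle X_1,X_2\rangle$ of the chores there is an agent $i\in\{1,2\}$ with $V_i(X_i)\le \frac{4}{3}\mathsf{WMMS}_i$. In other words, no algorithm can guarantee every agent $i$ a value strictly larger than $\frac43\mathsf{WMMS}_i$; any algorithm has approximation ratio at least $\frac43$ for WMMS fairness.
   Context: A chore allocation instance consists of agents $N=\{1,\dots,n\}$, chores $M$, additive valuations $V_i$ with $V_i(\{j\})\le 0$, $V_i(M)=-1$, and shares $s_i\in(0,1]$ summing to $1$. An allocation is an ordered partition $\langle X_1,\dots,X_n\rangle$ of $M$ (bundles possibly empty). The weighted maxmin share is $\mathsf{WMMS}_i:=\max_{\langle Y_1,\dots,Y_n\rangle}\min_{k\in N}V_i(Y_k)\frac{s_i}{s_k}$, the maximum over all allocations. For $\alpha\ge1$, an allocation is $\alpha$-WMMS if $V_i(X_i)\ge\alpha\,\mathsf{WMMS}_i$ for all $i$. *)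

From HB Require Import structures.
From mathcomp Require Import all_boot all_order all_algebra.
From mathcomp Require Import reals.
Set Implicit Arguments. Unset Strict Implicit. Unset Printing Implicit Defensive.
Import Order.TTheory GRing.Theory Num.Theory.
Local Open Scope ring_scope.

(* Agents are 'I_n.+1, chores a finType M.  An allocation (ordered partition
   <X_1,...,X_n> of M, bundles possibly empty) is a function assigning each
   chore to an agent: X k = [set j | X j == k]. *)

Section ChoreDefs.
Variables (R : realType) (n : nat) (M : finType).

Definition bundle_val (vi : M -> R) (X : {ffun M -> 'I_n.+1}) (k : 'I_n.+1) : R :=
  \sum_(j | X j == k) vi j.

(* min_k V_i(Y_k) * s_i / s_k  (min over a nonempty finite set; the seed is
   one of the members, so this is the exact minimum) *)
Definition wmms_min (v : 'I_n.+1 -> M -> R) (s : 'I_n.+1 -> R) (i : 'I_n.+1)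
    (Y : {ffun M -> 'I_n.+1}) : R :=
  \big[Num.min/ bundle_val (v i) Y ord0 * s i / s ord0]_(k : 'I_n.+1)
     (bundle_val (v i) Y k * s i / s k).

(* WMMS_i = max over all allocations Y of min_k V_i(Y_k) s_i / s_k
   (again the seed is a member of the maximised family) *)
Definition WMMS (v : 'I_n.+1 -> M -> R) (s : 'I_n.+1 -> R) (i : 'I_n.+1) : R :=
  \big[Num.max/ wmms_min v s i [ffun => ord0]]_(Y : {ffun M -> 'I_n.+1})
     wmms_min v s i Y.

Definition chore_instance (v : 'I_n.+1 -> M -> R) (s : 'I_n.+1 -> R) : Prop :=
  [/\ forall i j, v i j <= 0,
      forall i, \sum_(j : M) v i j = -1,
      forall i, 0 < s i <= 1 &
      \sum_(i : 'I_n.+1) s i = 1].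

End ChoreDefs.

From HB Require Import structures.
From mathcomp Require Import all_boot all_order all_algebra.
From mathcomp Require Import reals.
From mathcomp Require Import lra.
Import Order.TTheory GRing.Theory Num.Theory.
Local Open Scope ring_scope.

(* Agent 1 values both chores equally but has the small share 1/4, so handing
   both chores to agent 2 gives WMMS_1 >= -1/3, while the identity allocation
   gives WMMS_2 >= -3/4.  An allocation giving agent 1 a chore leaves it with
   -1/2 <= 4/3 * (-1/3); the only other one leaves agent 2 with -1 = 4/3 * (-3/4). *)

Lemma le_WMMS {R : realType} {n : nat} {M : finType} (Y : {ffun M -> 'I_n.+1})
    (v : 'I_n.+1 -> M -> R) (s : 'I_n.+1 -> R) (i : 'I_n.+1) (w : R) :
  (forall k, w <= bundle_val (v i) Y k * s i / s k) -> w <= WMMS v s i.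
Proof.
move=> Yw; apply: le_trans (le_bigmax _ _ Y).
by apply: le_bigmin => // k _; apply: Yw.
Qed.

Lemma ord2P (x : 'I_2) : x = ord0 \/ x = ord_max.
Proof. by case: x => [[|[|m]] lt_x2]; [left | right | by []]; apply: val_inj. Qed.

Lemma bundle_val_ord2 (R : realType) (n : nat) (vi : 'I_2 -> R)
    (X : {ffun 'I_2 -> 'I_n.+1}) (k : 'I_n.+1) :
  bundle_val vi X k =
    (if X ord0 == k then vi ord0 else 0) + (if X ord_max == k then vi ord_max else 0).
Proof.
have -> : ord_max = lift ord0 ord0 :> 'I_2 by apply: val_inj.
by rewrite /bundle_val big_mkcond big_ord_recl big_ord1.
Qed.

Section HardInstance.
Variable R : realType.

Definition hard_val (i j : 'I_2) : R :=
  if i == ord0 then -1/2 else if j == ord0 then -1/4 else -3/4.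

Definition hard_share (i : 'I_2) : R := if i == ord0 then 1/4 else 3/4.

Lemma hard_chore_instance : chore_instance hard_val hard_share.
Proof.
rewrite /hard_val /hard_share; split.
- by move=> i j; case: (i == ord0); case: (j == ord0); lra.
- by move=> i; rewrite big_ord_recl big_ord1 /=; case: (i == ord0); lra.
- by move=> i; case: (i == ord0); apply/andP; split; lra.
- by rewrite big_ord_recl big_ord1 /=; lra.
Qed.

Lemma WMMS_hard_ord0 : -1/3 <= WMMS hard_val hard_share ord0.
Proof.
apply: (le_WMMS [ffun => ord_max]) => k.
by rewrite bundle_val_ord2 /hard_val /hard_share !ffunE; case: (ord2P k) => -> /=; lra.
Qed.

Lemma WMMS_hard_ord_max : -3/4 <= WMMS hard_val hard_share ord_max.
Proof.
apply: (le_WMMS [ffun j => j]) => k.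
by rewrite bundle_val_ord2 /hard_val /hard_share !ffunE; case: (ord2P k) => -> /=; lra.
Qed.

Lemma hard_ord0_bound (X : {ffun 'I_2 -> 'I_2}) (j : 'I_2) : X j = ord0 ->
  bundle_val (hard_val ord0) X ord0 <= 4/3 * WMMS hard_val hard_share ord0.
Proof.
move=> Xj; move: WMMS_hard_ord0; set w := WMMS _ _ _ => w_ge.
rewrite bundle_val_ord2 /hard_val eqxx.
by case: (ord2P j) Xj => -> ->; rewrite eqxx; case: (_ == _); lra.
Qed.

Lemma hard_ord_max_bound (X : {ffun 'I_2 -> 'I_2}) :
    X ord0 = ord_max -> X ord_max = ord_max ->
  bundle_val (hard_val ord_max) X ord_max <= 4/3 * WMMS hard_val hard_share ord_max.
Proof.
move=> X0 X1; move: WMMS_hard_ord_max; set w := WMMS _ _ _ => w_ge.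
by rewrite bundle_val_ord2 X0 X1 eqxx /hard_val /=; lra.
Qed.

End HardInstance.

Theorem lemma3 (R : realType) :
  exists (v : 'I_2 -> 'I_2 -> R) (s : 'I_2 -> R),
    chore_instance v s /\
    forall X : {ffun 'I_2 -> 'I_2},
      exists i : 'I_2, bundle_val (v i) X i <= 4 / 3 * WMMS v s i.
Proof.
exists (hard_val R), (hard_share R); split; first exact: hard_chore_instance.
move=> X; have [X0|X0] := ord2P (X ord0).
  by exists ord0; exact: hard_ord0_bound X0.
have [X1|X1] := ord2P (X ord_max).
  by exists ord0; exact: hard_ord0_bound X1.
by exists ord_max; exact: hard_ord_max_bound.
Qed.
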